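(* For all $n\ge0$ and complex parameters, with the convention $E_{n,k}=0$ if $k<0$, $k>n$ or $n<0$: (i) $E_{n,k}(a,b;c_0+a,c_\infty-a)=E_{n,k}+an\,(E_{n-1,k}-E_{n-1,k-1})$, where every number on the right has parameters $(a,b;c_0,c_\infty)$, for $0\le k\le n$; (ii) $E_{n,k}(a,b;c_0+b,-c_0)=E_{n,k+1}(a,b;c_0,b-c_0)+(-1)^k(c_0)^{\underline n,a}\binom{n+1}{k+1}$ for $-1\le k\le n$; (iii) $c_\infty\,E_{n,k}(a,b;b-a,c_\infty+a)=E_{n+1,k+1}(a,b;0,c_\infty)$ for $-1\le k\le n$; (iv) $c_0\,E_{n,k}(a,b;c_0-a,a+b)=E_{n+1,k}(a,b;c_0,0)$ for $0\le k\le n$; (v) $c\,[E_{n,k+1}(a,b;c-a,a-c)-E_{n,k}(a,b;c-a,a-c)]=E_{n+1,k+1}(a,b;c,-c)$ for $-1\le k\le n$.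
   Context: Generalized Eulerian numbers $E_{n,k}(a,b;c_0,c_\infty)$: defined by $E_{0,0}=1$, $E_{n,k}=0$ if $n<0$, $k<0$ or $k>n$, and $E_{n+1,k+1}=[-an+b(k+1)+c_0]E_{n,k+1}+[(a+b)n-bk+c_\infty]E_{n,k}$ for $n\ge0$, $k\in\mathbb Z$. $(x)^{\underline n,a}=\prod_{i=0}^{n-1}(x-ia)$. *)

From HB Require Import structures.
From mathcomp Require Import all_boot all_order all_algebra.
From mathcomp Require Import complex.
From mathcomp Require Import reals.
Set Implicit Arguments. Unset Strict Implicit. Unset Printing Implicit Defensive.
Import Order.TTheory GRing.Theory Num.Theory.
Local Open Scope ring_scope.

(* E_{0,k} = [k = 0]; E_{n+1,k} = (-a n + b k + c0) E_{n,k}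
                                 + ((a+b) n - b (k-1) + cinf) E_{n,k-1},
   which is the recursion of the paper with k+1 renamed k; the values with
   k < 0 or k > n are 0 (this follows from the recursion). *)
Fixpoint genEuler (F : ringType) (a b c0 cinf : F) (n : nat) (k : int) : F :=
  match n with
  | 0 => if k == 0 then 1 else 0
  | m.+1 => (- a * m%:R + b * k%:~R + c0) * genEuler a b c0 cinf m k
            + ((a + b) * m%:R - b * (k - 1)%:~R + cinf)
              * genEuler a b c0 cinf m (k - 1)
  end.

Definition gfall (F : ringType) (x a : F) (n : nat) : F :=
  \prod_(i < n) (x - i%:R * a).

From HB Require Import structures.
From mathcomp Require Import all_boot all_order all_algebra ring.
From mathcomp Require Import complex.
From mathcomp Require Import reals.
Import Order.TTheory GRing.Theory Num.Theory.
Local Open Scope ring_scope.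

(* For (ii) the two families with parameters
   (c0 + b, -c0) and (c0, b - c0) obey the same recursion up to the index shift
   k |-> k + 1, so their difference is driven only by the column k = 0, which is
   the falling factorial (c0)^{n,a}; the signed binomial correction
   (-1)^j (c0)^{n,a} C(n+1, j) solves that same recursion thanks to
   j C(n+2, j) = (n+2) C(n+1, j-1). *)

Section GenEulerIdentities.
Variable F : comNzRingType.

Lemma genEuler0 (a b c0 cinf : F) (k : int) : genEuler a b c0 cinf 0 k = (k == 0)%:R.
Proof. by rewrite /=; case: eqP. Qed.

Lemma genEulerS (a b c0 cinf : F) (n : nat) (k : int) :
  genEuler a b c0 cinf n.+1 k =
    (- a * n%:R + b * k%:~R + c0) * genEuler a b c0 cinf n k
    + ((a + b) * n%:R - b * (k - 1)%:~R + cinf) * genEuler a b c0 cinf n (k - 1).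
Proof. by []. Qed.

Lemma genEuler_neg (a b c0 cinf : F) (n : nat) (k : int) : k < 0 -> genEuler a b c0 cinf n k = 0.
Proof.
elim: n k => [|n IHn] k k_lt0; first by rewrite genEuler0 (negPf (ltr0_neq0 k_lt0)).
by rewrite genEulerS !IHn ?mulr0 ?addr0 // (lt_trans _ k_lt0) // gtrDl ltrN10.
Qed.

Lemma genEuler_k0 (a b c0 cinf : F) (n : nat) : genEuler a b c0 cinf n 0 = gfall c0 a n.
Proof.
elim: n => [|n IHn]; first by rewrite /gfall big_ord0.
rewrite genEulerS (@genEuler_neg _ _ _ _ _ (0 - 1)) // IHn.
by rewrite /gfall big_ord_recr /=; ring.
Qed.

Lemma genEuler_c0Da (a b c0 cinf : F) (n : nat) (k : int) :
  genEuler a b (c0 + a) (cinf - a) n k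
  = genEuler a b c0 cinf n k
    + a * n%:R * (genEuler a b c0 cinf n.-1 k - genEuler a b c0 cinf n.-1 (k - 1)).
Proof.
elim: n k => [|n IHn] k; first by rewrite !genEuler0 mulr0 mul0r addr0.
rewrite [LHS]genEulerS !IHn [genEuler _ _ c0 cinf n.+1 k]genEulerS.
by case: n {IHn} => [|n] /=; ring.
Qed.

Lemma genEulerS_c00 (a b cinf : F) (n : nat) (k : int) :
  cinf * genEuler a b (b - a) (cinf + a) n k = genEuler a b 0 cinf n.+1 (k + 1).
Proof.
elim: n k => [|n IHn] k.
  rewrite genEulerS !genEuler0 addrK.
  have [->|_] := eqVneq k 0; first by rewrite /=; ring.
  by have [->|_] := eqVneq (k + 1) 0; rewrite /=; ring.
rewrite [RHS]genEulerS addrK -IHn.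
have := IHn (k - 1); rewrite subrK => <-.
by rewrite genEulerS; ring.
Qed.

Lemma genEulerS_cinf0 (a b c0 : F) (n : nat) (k : int) :
  c0 * genEuler a b (c0 - a) (a + b) n k = genEuler a b c0 0 n.+1 k.
Proof.
elim: n k => [|n IHn] k.
  rewrite genEulerS !genEuler0 subr_eq0.
  have [->|_] := eqVneq k 0; first by rewrite /=; ring.
  by have [->|_] := eqVneq k 1; rewrite /=; ring.
by rewrite [RHS]genEulerS -!IHn genEulerS; ring.
Qed.

Lemma genEulerS_cinfN (a b c : F) (n : nat) (k : int) :
  c * (genEuler a b (c - a) (a - c) n (k + 1) - genEuler a b (c - a) (a - c) n k)
  = genEuler a b c (- c) n.+1 (k + 1).
Proof.
elim: n k => [|n IHn] k.
  rewrite genEulerS !genEuler0 addrK.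
  have [->|_] := eqVneq k 0; first by rewrite /=; ring.
  by have [->|_] := eqVneq (k + 1) 0; rewrite /=; ring.
rewrite [RHS]genEulerS addrK -IHn.
have := IHn (k - 1); rewrite subrK => <-.
by rewrite !genEulerS addrK; ring.
Qed.

Definition eulerCorr (c0 a : F) (n j : nat) : F :=
  (-1) ^+ j * gfall c0 a n * 'C(n.+1, j)%:R.

Lemma eulerCorr0 (c0 a : F) (n : nat) : eulerCorr c0 a n 0 = gfall c0 a n.
Proof. by rewrite /eulerCorr bin0 expr0 mul1r mulr1. Qed.

Lemma eulerCorrS (a b c0 : F) (n i : nat) :
  eulerCorr c0 a n.+1 i.+1
  = (- a * n%:R + b * i.+1%:R + c0) * eulerCorr c0 a n i.+1
    + ((a + b) * n%:R - b * i%:R + (b - c0)) * eulerCorr c0 a n i.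
Proof.
have bin_diag : i.+1%:R * 'C(n.+2, i.+1)%:R = n.+2%:R * 'C(n.+1, i)%:R :> F.
  by rewrite -!natrM -mul_bin_diag.
rewrite /eulerCorr /gfall big_ord_recr -/(gfall c0 a n) /= !exprS.
move: bin_diag; rewrite binS natrD !mulrSr.
set x := 'C(n.+1, i.+1)%:R; set y := 'C(n.+1, i)%:R.
set g := gfall c0 a n; set s := (-1) ^+ i.
clearbody x y g s => bin_diag.
(* the terms in [b] cancel by [bin_diag]; the others match as polynomials *)
apply/eqP; rewrite -subr_eq0; apply/eqP.
transitivity (s * g * b * ((i%:R + 1) * (x + y) - (n%:R + 1 + 1) * y)); first ring.
by rewrite bin_diag subrr mulr0.
Qed.

Lemma genEuler_c0Db (a b c0 : F) (n j : nat) :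
  genEuler a b c0 (b - c0) n j
  = genEuler a b (c0 + b) (- c0) n (j%:Z - 1) + eulerCorr c0 a n j.
Proof.
case: j => [|i]; first by rewrite genEuler_k0 genEuler_neg // eulerCorr0 add0r.
have shift (m : nat) : (m.+1%:Z - 1 = m)%R by rewrite -addn1 PoszD addrK.
rewrite shift; elim: n i => [|n IHn] i.
  rewrite !genEuler0 /eulerCorr /gfall big_ord0 mulr1.
  case: i => [|i]; first by rewrite binn expr1 /=; ring.
  by rewrite bin_small // mulr0 addr0 !eqz_nat.
rewrite [LHS]genEulerS [genEuler _ _ (c0 + b) _ _ _]genEulerS (eulerCorrS a b) IHn.
case: i => [|i].
  rewrite shift (genEuler_k0 a b c0) -(eulerCorr0 c0 a n) (@genEuler_neg _ _ _ _ _ (0 - 1)) //.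
  by ring.
by rewrite !shift IHn; ring.
Qed.

End GenEulerIdentities.

Lemma exprzN1_pred (F : unitRingType) (j : nat) : (-1 : F) ^ (j%:Z - 1) = - (-1) ^+ j.
Proof.
case: j => [|i]; first by rewrite expr0 sub0r exprN1 invrN1.
by rewrite exprS mulN1r opprK -addn1 PoszD addrK.
Qed.

Theorem mainTheorem16 (R : realType) (a b c0 cinf c : complex R) (n : nat) :
  (* (i) *)
  (forall k : int, 0 <= k <= n%:Z ->
     genEuler a b (c0 + a) (cinf - a) n k
     = genEuler a b c0 cinf n k
       + a * n%:R * (genEuler a b c0 cinf n.-1 k
                     - genEuler a b c0 cinf n.-1 (k - 1))) /\
  (* (ii) *)
  (forall k : int, -1 <= k <= n%:Z ->
     genEuler a b (c0 + b) (- c0) n k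
     = genEuler a b c0 (b - c0) n (k + 1)
       + exprz (-1) k * gfall c0 a n * ('C(n.+1, absz (k + 1)))%:R) /\
  (* (iii) *)
  (forall k : int, -1 <= k <= n%:Z ->
     cinf * genEuler a b (b - a) (cinf + a) n k
     = genEuler a b 0 cinf n.+1 (k + 1)) /\
  (* (iv) *)
  (forall k : int, 0 <= k <= n%:Z ->
     c0 * genEuler a b (c0 - a) (a + b) n k
     = genEuler a b c0 0 n.+1 k) /\
  (* (v) *)
  (forall k : int, -1 <= k <= n%:Z ->
     c * (genEuler a b (c - a) (a - c) n (k + 1)
          - genEuler a b (c - a) (a - c) n k)
     = genEuler a b c (- c) n.+1 (k + 1)).
Proof.
split; [by move=> k _; apply: genEuler_c0Da|].
split; last by do ![split]; move=> k _;
  [apply: genEulerS_c00 | apply: genEulerS_cinf0 | apply: genEulerS_cinfN].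
move=> k /andP[k_geN1 _].
have [j k_succ] : exists j : nat, k + 1 = j.
  by exists (absz (k + 1)); rewrite gez0_abs // -lerBlDr sub0r.
have -> : k = j%:Z - 1 by rewrite -k_succ addrK.
rewrite subrK genEuler_c0Db /eulerCorr exprzN1_pred /=.
by rewrite !mulNr addrK.
Qed.
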